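(* Consider SALIQUANT. Then $\mathcal{SG}(0)=0$, and if $n$ is odd, then $\mathcal{SG}(n)=\frac{n-1}{2}$. Moreover, $\mathcal{SG}(n)<n/2$.
   Context: SALIQUANT is the impartial normal-play game on the nonnegative integers where from $n$ a player subtracts a nondivisor of $n$: $\mathrm{opt}(n)=\{n-k: 1\le k\le n,\ k\nmid n\}$; the player unable to move loses. $\mathcal{SG}$ denotes the Sprague-Grundy value (mex rule). *)

From mathcomp Require Import all_boot.
Set Implicit Arguments. Unset Strict Implicit. Unset Printing Implicit Defensive.

(* SALIQUANT: from n, subtract k with 1 <= k <= n and ~~ (k %| n). *)
Definition opt (n : nat) : seq nat :=
  [seq n - k | k <- iota 1 n & ~~ (k %| n)].

Definition mex (s : seq nat) : nat :=
  find (fun m => m \notin s) (iota 0 (size s).+1).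

(* sgs n = [:: SG 0; SG 1; ...; SG (n-1)], built by the mex rule *)
Fixpoint sgs (n : nat) : seq nat :=
  match n with
  | 0 => [::]
  | n'.+1 => let t := sgs n' in
      rcons t (mex [seq nth 0 t m | m <- opt n'])
  end.

Definition SG (n : nat) : nat := nth 0 (sgs n.+1) n.

(* Every option m of n satisfies 1 <= m <= n - 2, since subtracting n or 1
   is forbidden; by induction SG m <= (m - 1)/2 < (n - 1)/2, so the mex
   SG n is at most (n - 1)/2.  For odd n every odd m < n is an option,
   because the even difference n - m cannot divide n; by induction these
   options realise all values below (n - 1)/2, so the bound is attained. *)

From mathcomp Require Import all_boot.
From mathcomp Require Import zify.

Lemma mex_notin s : mex s \notin s.
Proof.
have has_gap : has (fun m => m \notin s) (iota 0 (size s).+1).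
  apply/negPn/negP => /hasPn all_in.
  have /(uniq_leq_size (iota_uniq 0 _)) : {subset iota 0 (size s).+1 <= s}.
    by move=> x /all_in /negPn.
  by rewrite size_iota ltnn.
have := nth_find 0 has_gap; rewrite has_find size_iota in has_gap.
by rewrite nth_iota.
Qed.

Lemma mem_lt_mex s w : w < mex s -> w \in s.
Proof.
move=> lt_w_mex; have := before_find 0 lt_w_mex.
have mex_le_size : mex s <= (size s).+1.
  by rewrite -[X in _ <= X](size_iota 0); apply: find_size.
rewrite nth_iota ?add0n => [/negbFE // |].
exact: leq_trans lt_w_mex mex_le_size.
Qed.

Lemma mex_leq s b : b \notin s -> mex s <= b.
Proof. by apply: contraR; rewrite -ltnNge => /mem_lt_mex. Qed.

Lemma leq_mex s b : (forall t, t < b -> t \in s) -> b <= mex s.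
Proof.
by move=> sub_s; rewrite leqNgt; apply/negP => /sub_s; apply/negP/mex_notin.
Qed.

Lemma mem_opt n m : (m \in opt n) = (m < n) && ~~ (n - m %| n).
Proof.
apply/mapP/andP => [[k] | [lt_mn ndvd]].
  rewrite mem_filter mem_iota => /and3P [ndvd k_gt0 k_le] ->.
  by split; [lia | rewrite subKn].
by exists (n - m); rewrite ?mem_filter ?mem_iota ?ndvd /=; lia.
Qed.

Lemma opt_interior n m : m \in opt n -> 0 < m < n.-1.
Proof.
rewrite mem_opt => /andP [lt_mn ndvd].
have m_neq0 : m != 0 by apply: contraNneq ndvd => ->; rewrite subn0.
have m_neq_pred : n - m != 1 by apply: contraNneq ndvd => ->.
lia.
Qed.

Lemma odd_opt n m : odd n -> odd m -> m < n -> m \in opt n.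
Proof.
move=> odd_n odd_m lt_mn; rewrite mem_opt lt_mn /=.
have even_diff : ~~ odd (n - m) by rewrite oddB ?odd_n ?odd_m // ltnW.
by apply: contra even_diff => /dvdn_odd; apply.
Qed.

Lemma size_sgs n : size (sgs n) = n.
Proof. by elim: n => //= n IH; rewrite size_rcons IH. Qed.

Lemma nth_sgs n i : i < n -> nth 0 (sgs n) i = SG i.
Proof.
elim: n => // n IH; rewrite ltnS leq_eqVlt => /predU1P [-> | lt_in].
  by rewrite /SG.
by rewrite /= nth_rcons size_sgs lt_in IH.
Qed.

Lemma SG_mex n : SG n = mex [seq SG m | m <- opt n].
Proof.
rewrite /SG /= nth_rcons size_sgs ltnn eqxx; congr mex.
by apply/eq_in_map => m /opt_interior m_range; apply: nth_sgs; lia.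
Qed.

Lemma SG_leq_half n : SG n <= n.-1./2.
Proof.
elim/ltn_ind: n => n IH; rewrite SG_mex mex_leq //.
apply/mapP => -[m /opt_interior m_range eq_SG]; have := IH m.
lia.
Qed.

Lemma SG_odd n : odd n -> SG n = n.-1./2.
Proof.
elim/ltn_ind: n => n IH odd_n; apply/eqP; rewrite eqn_leq SG_leq_half /=.
rewrite SG_mex; apply: leq_mex => t lt_t; apply/mapP; exists t.*2.+1.
  by apply: odd_opt => //=; [rewrite odd_double | lia].
rewrite IH /= ?odd_double //; lia.
Qed.

Theorem mainTheorem5 :
  SG 0 = 0 /\
  (forall n : nat, odd n -> SG n = n.-1./2) /\
  (forall n : nat, 0 < n -> (SG n).*2 < n).
Proof.
split; first by [].
split; first exact: SG_odd.
by move=> n n_gt0; have := SG_leq_half n; lia.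
Qed.
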